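(* Let $\tau\colon\mathbb R^{\mathbb Z}\to\mathbb R^{\mathbb Z}$ be defined by $\tau(x)(n)=x(n+1)-x(n)^2$ for all $x\in\mathbb R^{\mathbb Z}$ and $n\in\mathbb Z$. Then $\tau$ is an algebraic cellular automaton over $\mathbb R$ (with memory set $\{0,1\}$ and local defining map $(x_0,x_1)\mapsto x_1-x_0^2$), its image $\tau(\mathbb R^{\mathbb Z})$ is dense in $\mathbb R^{\mathbb Z}$ for the prodiscrete topology, the constant configuration $z\equiv 1$ is not in $\tau(\mathbb R^{\mathbb Z})$, and hence $\tau(\mathbb R^{\mathbb Z})$ is not closed in $\mathbb R^{\mathbb Z}$ for the prodiscrete topology.
   Context: The prodiscrete topology on $\mathbb R^{\mathbb Z}$ is the product topology where each factor $\mathbb R$ is given the discrete topology. A cellular automaton over $\mathbb Z$ with alphabet $\mathbb R$ is a map $\tau$ for which there exist a finite $M\subset\mathbb Z$ and $\mu\colon\mathbb R^M\to\mathbb R$ with $\tau(x)(n)=\mu((m\mapsto x(n+m))_{m\in M})$; it is algebraic if $\mu$ is a polynomial map. *)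

From Stdlib Require Import Reals ZArith List.
Open Scope R_scope.

Definition config := Z -> R.

Definition tau (x : config) : config := fun n => x (n + 1)%Z - (x n) ^ 2.

(* Restriction of the shifted configuration to the memory set M (a finite
   duplicate-free list of integers), i.e. the element (m |-> x(n+m)) of R^M,
   represented as the list of its values in the order of M. *)
Definition pattern (M : list Z) (x : config) (n : Z) : list R :=
  map (fun m => x (n + m)%Z) M.

Definition is_cellular_automaton (t : config -> config) : Prop :=
  exists (M : list Z) (mu : list R -> R), NoDup M /\
    forall x n, t x n = mu (pattern M x n).

Inductive polyexpr : Type :=
| PConst : R -> polyexpr
| PVar : nat -> polyexpr
| PAdd : polyexpr -> polyexpr -> polyexpr
| PMul : polyexpr -> polyexpr -> polyexpr.

Fixpoint peval (p : polyexpr) (v : list R) : R :=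
  match p with
  | PConst c => c
  | PVar i => nth i v 0
  | PAdd p q => peval p v + peval q v
  | PMul p q => peval p v * peval q v
  end.

Definition is_polynomial_map (k : nat) (mu : list R -> R) : Prop :=
  exists p : polyexpr, forall v, length v = k -> mu v = peval p v.

Definition is_algebraic_CA (t : config -> config) : Prop :=
  exists (M : list Z) (mu : list R -> R), NoDup M /\
    is_polynomial_map (length M) mu /\
    forall x n, t x n = mu (pattern M x n).

(* Prodiscrete topology on R^Z: U is open iff every point of U has a
   basic neighbourhood {y | y = x on F} (F finite) contained in U. *)
Definition prodiscrete_open (U : config -> Prop) : Prop :=
  forall x, U x -> exists F : list Z,
    forall y, (forall k, In k F -> y k = x k) -> U y.

Definition prodiscrete_closed (S : config -> Prop) : Prop :=
  prodiscrete_open (fun x => ~ S x).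

Definition prodiscrete_dense (S : config -> Prop) : Prop :=
  forall U, prodiscrete_open U -> (exists x, U x) -> exists y, U y /\ S y.

Definition image (t : config -> config) : config -> Prop :=
  fun z => exists x, t x = z.

Definition mu_tau (v : list R) : R := nth 1 v 0 - (nth 0 v 0) ^ 2.

(* Surjectivity fails only "at minus infinity".  Given x and a finite window,
   start a preimage with zeros below the window and solve
   w(n+1) = x(n) + w(n)^2 forwards; hence tau has dense image.  The constant
   configuration 1 has no preimage: w(n+1) = 1 + w(n)^2 >= w(n) + 3/4 forces
   w(-m) <= w(0) - 3m/4, contradicting w >= 1. *)

From Stdlib Require Import Reals ZArith List Lra Lia.
Open Scope R_scope.

Lemma mu_tau_polynomial (k : nat) : is_polynomial_map k mu_tau.
Proof.
  exists (PAdd (PVar 1) (PMul (PConst (-1)) (PMul (PVar 0) (PVar 0)))).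
  intros v _. unfold mu_tau; simpl; ring.
Qed.

Lemma tau_local_rule (x : config) (n : Z) :
  tau x n = mu_tau (pattern (0%Z :: 1%Z :: nil) x n).
Proof. unfold tau, mu_tau, pattern; simpl. now rewrite Z.add_0_r. Qed.

Lemma NoDup_0_1 : NoDup (0%Z :: 1%Z :: nil).
Proof.
  constructor; [simpl; intros [H | []]; discriminate |].
  constructor; [simpl; tauto | constructor].
Qed.

Lemma tau_algebraic_CA : is_algebraic_CA tau.
Proof.
  exists (0%Z :: 1%Z :: nil), mu_tau.
  split; [exact NoDup_0_1 | split; [apply mu_tau_polynomial | exact tau_local_rule]].
Qed.

Section Prodiscrete.

Variable S : config -> Prop.

(* Cylinders {y | y = x on F} are the basic prodiscrete open sets. *)
Hypothesis S_meets_cylinders :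
  forall (x : config) (F : list Z),
    exists y, S y /\ forall k, In k F -> y k = x k.

Lemma prodiscrete_dense_of_cylinders : prodiscrete_dense S.
Proof.
  intros U HU [x Ux].
  destruct (HU x Ux) as [F HF].
  destruct (S_meets_cylinders x F) as [y [Sy Hy]].
  exists y; split; [exact (HF y Hy) | exact Sy].
Qed.

Lemma not_prodiscrete_closed_of_cylinders (z : config) :
  ~ S z -> ~ prodiscrete_closed S.
Proof.
  intros Sz Hclosed.
  destruct (Hclosed z Sz) as [F HF].
  destruct (S_meets_cylinders z F) as [y [Sy Hy]].
  exact (HF y Hy Sy).
Qed.

End Prodiscrete.

Lemma list_Z_lower_bound (F : list Z) :
  exists N, forall k, In k F -> (N <= k)%Z.
Proof.
  induction F as [| a F [N HN]]; [exists 0%Z; intros k [] |].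
  exists (Z.min a N). intros k [<- | Hk]; [lia |].
  specialize (HN k Hk); lia.
Qed.

(* [forward_solution x N m] is the value at N + m of the preimage of x
   that vanishes at N. *)
Fixpoint forward_solution (x : config) (N : Z) (m : nat) : R :=
  match m with
  | O => 0
  | S m' => x (N + Z.of_nat m')%Z + forward_solution x N m' ^ 2
  end.

Definition preimage_from (x : config) (N : Z) : config :=
  fun k => if (k <? N)%Z then 0 else forward_solution x N (Z.to_nat (k - N)).

Lemma tau_preimage_from (x : config) (N k : Z) :
  (N <= k)%Z -> tau (preimage_from x N) k = x k.
Proof.
  intros HNk. unfold tau, preimage_from.
  destruct (Z.ltb_spec (k + 1) N); [lia |].
  destruct (Z.ltb_spec k N); [lia |].
  replace (Z.to_nat (k + 1 - N)) with (S (Z.to_nat (k - N))) by lia.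
  simpl forward_solution.
  replace (N + Z.of_nat (Z.to_nat (k - N)))%Z with k by lia.
  ring.
Qed.

Lemma image_tau_meets_cylinders (x : config) (F : list Z) :
  exists y, image tau y /\ forall k, In k F -> y k = x k.
Proof.
  destruct (list_Z_lower_bound F) as [N HN].
  exists (tau (preimage_from x N)). split; [now exists (preimage_from x N) |].
  intros k Hk. exact (tau_preimage_from x _ _ (HN k Hk)).
Qed.

Lemma one_not_in_image_tau : ~ image tau (fun _ => 1).
Proof.
  intros [x Hx].
  assert (Hstep : forall n, x (n + 1)%Z = 1 + x n ^ 2).
  { intro n. pose proof (f_equal (fun f => f n) Hx) as Hn.
    unfold tau in Hn; simpl in Hn; lra. }
  assert (Hge1 : forall n, 1 <= x n).
  { intro n. replace n with ((n - 1) + 1)%Z by lia. rewrite Hstep. nra. }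
  (* 1 + a^2 - a - 3/4 = (a - 1/2)^2 *)
  assert (Hdrift : forall m : nat, x (- Z.of_nat m)%Z + 3/4 * INR m <= x 0%Z).
  { induction m as [| m IH]; [simpl; lra |].
    replace (- Z.of_nat m)%Z with (- Z.of_nat (S m) + 1)%Z in IH by lia.
    rewrite Hstep in IH. rewrite S_INR.
    pose proof (pow2_ge_0 (x (- Z.of_nat (S m))%Z - 1/2)). nra. }
  destruct (INR_archimed (3/4) (x 0%Z)) as [m Hm]; [lra |].
  specialize (Hdrift m). specialize (Hge1 (- Z.of_nat m)%Z). lra.
Qed.

Theorem mainTheorem11 :
  is_algebraic_CA tau /\
  is_polynomial_map 2 mu_tau /\
  (forall x n, tau x n = mu_tau (pattern (0%Z :: 1%Z :: nil) x n)) /\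
  prodiscrete_dense (image tau) /\
  ~ image tau (fun _ => 1) /\
  ~ prodiscrete_closed (image tau).
Proof.
  split; [exact tau_algebraic_CA |].
  split; [apply mu_tau_polynomial |].
  split; [exact tau_local_rule |].
  split; [exact (prodiscrete_dense_of_cylinders _ image_tau_meets_cylinders) |].
  split; [exact one_not_in_image_tau |].
  exact (not_prodiscrete_closed_of_cylinders _ image_tau_meets_cylinders _
           one_not_in_image_tau).
Qed.
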